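(* Let $0.1<\gamma\le 1$, let $r=k$ be an integer with $3\le k<0.01\log^{1/2}n$, and let $n$ be sufficiently large. Then every set of $\gamma n^k$ vertices of $\mathcal{H}(n,k,k)$ spans at least $$\frac{\gamma^{k+1}\,n^{2k}}{k!\cdot 2^{3k^2}\cdot 10\cdot 2^{3k}\cdot k\cdot\log n}$$ hyperedges.
   Context: Logarithms are to base 2. For integers $n,k,r\ge3$, $\mathcal{H}(n,k,r)$ is the $r$-uniform hypergraph with vertex set $[n]^k$ whose edges are all $r$-element subsets of $[n]^k$ lying on a common line in $\mathbb{R}^k$. A vertex set spans an edge if the edge is contained in it. *)

From HB Require Import structures.
From mathcomp Require Import all_boot.
From Stdlib Require Import Reals ClassicalEpsilon.

Set Implicit Arguments.
Unset Strict Implicit.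
Unset Printing Implicit Defensive.

(* Vertex set [n]^k : a point x has coordinates (x i).+1 in {1,...,n}. *)
Definition vert (n k : nat) := {ffun 'I_k -> 'I_n}.

Definition coordR (n k : nat) (x : vert n k) (i : 'I_k) : R := INR (x i).+1.

Definition on_common_line (n k : nat) (A : {set vert n k}) : Prop :=
  exists (p d : 'I_k -> R), forall x, x \in A ->
    exists t : R, forall i : 'I_k, coordR x i = (p i + t * d i)%R.

(* Boolean version (via classical choice) so edges can be counted. *)
Definition on_common_lineb (n k : nat) (A : {set vert n k}) : bool :=
  if excluded_middle_informative (on_common_line A) then true else false.

Definition is_edge (n k r : nat) (e : {set vert n k}) : bool :=
  (#|e| == r) && on_common_lineb e.

Definition spanned_edges (n k r : nat) (S : {set vert n k}) : {set {set vert n k}} :=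
  [set e : {set vert n k} | (e \subset S) && is_edge r e].

Definition log2 (x : R) : R := (ln x / ln 2)%R.

From HB Require Import structures.
From mathcomp Require Import all_boot zify.
From Stdlib Require Import Reals ClassicalEpsilon Lra.

Set Implicit Arguments.
Unset Strict Implicit.
Unset Printing Implicit Defensive.

(* Reals rebinds ^ in nat_scope to Nat.pow; use expn as in MathComp. *)
Local Notation "a ^ b" := (expn a b) : nat_scope.

(* Fix a scale B of order n / k^2.  For every direction d in [B, 2B)^k, each
   point x of [n]^k is b + t d with t maximal, and then some coordinate of the
   base point b is below 2B; so the lines of direction d split S into at most
   L = 2 k B n^(k-1) fibres, and by the power mean inequality these contain
   at least (|S| - k L)^k / (k! L^(k-1)) k-subsets, each a spanned edge.  For
   two points a, b of an edge, the gap t_b - t_a <= n / B determines the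
   direction (b - a) / gap and then the base point, so summing over the B^k
   directions counts each edge at most n / B + 1 times.  For |S| >= n^k / 10
   this gives the bound even without the log n factor. *)

Lemma leq_exp2rW (a b p : nat) : a <= b -> a ^ p <= b ^ p.
Proof. by move=> le_ab; case: p => [|p]; rewrite ?expn0 // leq_exp2r. Qed.

Lemma chebyshev2 (a b p : nat) : a ^ p * b + b ^ p * a <= a ^ p.+1 + b ^ p.+1.
Proof.
wlog le_ab : a b / a <= b.
  move=> W; case: (leqP a b) => [|/ltnW lt_ba]; first exact: W.
  by rewrite addnC [X in _ <= X]addnC W.
have [t ->] : exists t, b = a + t by exists (b - a); rewrite subnKC.
have : a ^ p * t <= (a + t) ^ p * t by rewrite leq_mul2r leq_exp2rW ?leq_addr ?orbT.
rewrite !expnS; nia.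
Qed.

Lemma chebyshev_sum (I : finType) (A : pred I) (y : I -> nat) (p : nat) :
  (\sum_(i in A) y i ^ p) * (\sum_(i in A) y i) <= #|A| * \sum_(i in A) y i ^ p.+1.
Proof.
set lhs := _ * _.
have eL : lhs = \sum_(i in A) \sum_(j in A) y i ^ p * y j by rewrite /lhs big_distrlr.
have eL' : lhs = \sum_(i in A) \sum_(j in A) y j ^ p * y i by rewrite eL exchange_big.
have eR : #|A| * \sum_(i in A) y i ^ p.+1 = \sum_(i in A) \sum_(j in A) y i ^ p.+1.
  by rewrite big_distrr; apply: eq_bigr => i _; rewrite sum_nat_const.
have eR' : #|A| * \sum_(i in A) y i ^ p.+1 = \sum_(i in A) \sum_(j in A) y j ^ p.+1.
  by rewrite -sum_nat_const.
suff : lhs + lhs <= #|A| * \sum_(i in A) y i ^ p.+1 + #|A| * \sum_(i in A) y i ^ p.+1 by lia.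
rewrite {1}eL eL' {1}eR eR' -!big_split; apply: leq_sum => i _.
rewrite -!big_split; apply: leq_sum => j _; exact: chebyshev2.
Qed.

Lemma power_mean (I : finType) (A : pred I) (y : I -> nat) (p : nat) :
  (\sum_(i in A) y i) ^ p.+1 <= #|A| ^ p * \sum_(i in A) y i ^ p.+1.
Proof.
elim: p => [|p IH]; first by rewrite expn0 mul1n; apply: leq_sum => i _; rewrite expn1.
rewrite expnS mulnC; apply: leq_trans (leq_mul IH (leqnn _)) _.
by rewrite -mulnA expnS (mulnC #|A|) -mulnA leq_mul2l chebyshev_sum orbT.
Qed.

Lemma expn_sub_leq_ffact (s m : nat) : (s - m) ^ m <= s ^_ m.
Proof.
rewrite ffact_prod -[X in _ ^ X]card_ord -prod_nat_const.
by apply: leq_prod => i _; rewrite leq_sub2l // ltnW.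
Qed.

Lemma expn_sub_leq_fact_bin (s k : nat) : (s - k) ^ k <= k`! * 'C(s, k).
Proof. by rewrite mulnC bin_ffact expn_sub_leq_ffact. Qed.

Lemma card_coord_lt (n k M : nat) (i : 'I_k) :
  #|[set x : vert n k | x i < M]| <= M * n ^ k.-1.
Proof.
pose F (j : 'I_k) := if j == i then [pred y : 'I_n | y < M] else predT.
have -> : #|[set x : vert n k | x i < M]| = #|finfun.family F|.
  apply: eq_card => x; rewrite inE; apply/idP/familyP => [lt_xi j|/(_ i)].
    by rewrite /F; case: eqP => [->|].
  by rewrite /F eqxx.
rewrite card_family foldrE big_map big_enum (bigD1 i) //= /F eqxx.
apply: leq_mul.
  rewrite cardE -(size_map val) -[X in _ <= X](size_iota 0 M).
  apply: uniq_leq_size => [|y /mapP [z]]; first by rewrite (map_inj_uniq val_inj) enum_uniq.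
  by rewrite mem_enum inE mem_iota => lt_zM ->.
under eq_bigr => j /negbTE -> do rewrite card_ord.
by rewrite prod_nat_const cardC1 card_ord.
Qed.

Lemma card_some_coord_lt (n k M : nat) :
  #|[set x : vert n k | [exists i, x i < M]]| <= k * (M * n ^ k.-1).
Proof.
have sub : [set x : vert n k | [exists i, x i < M]] \subset
    \bigcup_(i : 'I_k) [set x : vert n k | x i < M].
  by apply/subsetP => x; rewrite inE => /existsP [i lt_xi]; apply/bigcupP; exists i; rewrite ?inE.
apply: leq_trans (subset_leq_card sub) _.
rewrite -[X in X * _]card_ord -sum_nat_const.
elim/big_ind2: _ => [|A a C c le_A le_C|i _]; first by rewrite cards0.
  exact: leq_trans (leq_card_setU A C) (leq_add le_A le_C).
exact: card_coord_lt.
Qed.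

Section Lines.
Variables (n k B : nat).
Implicit Types (f : {ffun 'I_k -> 'I_B}) (x c : vert n k) (S e : {set vert n k}).

(* A direction f encodes the step vector with coordinates f i + B in [B, 2B). *)
Definition step f (i : 'I_k) : nat := f i + B.

Definition line_pos f x : nat := \max_(t < n | [forall i, t * step f i <= x i]) t.

Lemma line_pos_step f x i : line_pos f x * step f i <= x i.
Proof.
rewrite /line_pos; elim/big_ind: _ i => [i|a b le_a le_b i|t /forallP //].
  by rewrite mul0n.
by rewrite /maxn; case: ltnP.
Qed.

Lemma line_base_subproof f x i : x i - line_pos f x * step f i < n.
Proof. exact: leq_ltn_trans (leq_subr _ _) (ltn_ord (x i)). Qed.

Definition line_base f x : vert n k := [ffun i => Ordinal (line_base_subproof f x i)].

Lemma line_baseE f x i : line_base f x i + line_pos f x * step f i = x i.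
Proof. by rewrite ffunE /= subnK // line_pos_step. Qed.

(* If every base coordinate were at least the step, one more step from x would
   stay in [n]^k, contradicting the maximality of line_pos. *)
Lemma line_base_small f x : 0 < k -> 0 < B -> [exists i, line_base f x i < 2 * B].
Proof.
move=> k_gt0 B_gt0; pose i0 := Ordinal k_gt0.
case: (boolP [exists i, line_base f x i < step f i]).
  case/existsP=> i lt_i; apply/existsP; exists i.
  by apply: leq_trans lt_i _; rewrite /step; have := ltn_ord (f i); lia.
move/existsPn=> ge_step; exfalso.
have next_ok i : (line_pos f x).+1 * step f i <= x i.
  by have := ge_step i; rewrite -leqNgt -(line_baseE f x i) mulSn; lia.
have next_lt : (line_pos f x).+1 < n.
  apply: leq_ltn_trans (ltn_ord (x i0)); apply: leq_trans (next_ok i0).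
  by rewrite leq_pmulr // /step addn_gt0 B_gt0 orbT.
have next_in : [forall i, Ordinal next_lt * step f i <= x i] by apply/forallP.
have := @leq_bigmax_cond _ (fun t : 'I_n => [forall i, t * step f i <= x i])
  (fun t => t) (Ordinal next_lt) next_in.
by rewrite -/(line_pos f x) /= ltnn.
Qed.

Definition line_fibre S f c := [set x in S | line_base f x == c].

Lemma line_fibre_step S f c x y (j : 'I_k) :
  0 < B -> x \in line_fibre S f c -> y \in line_fibre S f c -> x j < y j ->
  let u := line_pos f y - line_pos f x in
  [/\ 0 < u, u <= n %/ B, forall i, y i = x i + u * step f i :> nat & c = line_base f x].
Proof.
move=> B_gt0; rewrite !inE => /andP [_ /eqP bx] /andP [_ /eqP by_] lt_xy u.
have ex i : x i = c i + line_pos f x * step f i :> nat by rewrite -bx line_baseE.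
have ey i : y i = c i + line_pos f y * step f i :> nat by rewrite -by_ line_baseE.
have lt_pos : line_pos f x < line_pos f y.
  rewrite ltnNge; apply: contraL lt_xy => le_pos.
  by rewrite ex ey -leqNgt leq_add2l leq_mul2r le_pos orbT.
have eyx i : y i = x i + u * step f i :> nat.
  by rewrite ey ex /u -addnA -mulnDl subnKC // ltnW.
split => //; first by rewrite subn_gt0.
rewrite leq_divRL //; apply: leq_trans (ltnW (ltn_ord (y j))).
by rewrite eyx (leq_trans _ (leq_addl _ _)) // leq_mul2l /step leq_addl orbT.
Qed.

(* The gap between two points of an edge determines both the direction and the base point. *)
Lemma card_fibres_containing S e : 0 < B -> 1 < #|e| ->
  #|[set p : {ffun 'I_k -> 'I_B} * vert n k | e \subset line_fibre S p.1 p.2]| <= (n %/ B).+1.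
Proof.
move=> B_gt0 /card_gt1P [a [b [ea eb neq_ab]]].
have [j neq_j] : exists j, a j != b j.
  apply/existsP; apply: contraR neq_ab => /existsPn eq_ab.
  by apply/eqP/ffunP => i; apply/eqP; rewrite -[_ == _]negbK eq_ab.
wlog lt_j : a b ea eb neq_ab neq_j / a j < b j.
  move=> W; case: (ltngtP (a j) (b j)) => [|lt_ba|eq_j]; first exact: W.
    by apply: (W b a) => //; rewrite eq_sym.
  by move: neq_j; rewrite (val_inj eq_j) eqxx.
pose gap (p : {ffun 'I_k -> 'I_B} * vert n k) : 'I_(n %/ B).+1 :=
  inord (line_pos p.1 b - line_pos p.1 a).
rewrite -(card_in_imset (f := gap)); first by rewrite (leq_trans (max_card _)) ?card_ord.
move=> [f c] [f' c']; rewrite !inE /= => /subsetP sub /subsetP sub'.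
have [u_gt0 u_le eb_a ec] := line_fibre_step B_gt0 (sub _ ea) (sub _ eb) lt_j.
have [u_gt0' u_le' eb_a' ec'] := line_fibre_step B_gt0 (sub' _ ea) (sub' _ eb) lt_j.
rewrite /gap => /(congr1 val); rewrite /= !inordK ?ltnS // => eq_u.
suff eq_f : f = f' by rewrite ec ec' eq_f.
apply/ffunP => i; apply: val_inj; move: (eb_a i).
rewrite eb_a' eq_u => /eqP; rewrite eqn_add2l eqn_mul2l /step eqn_add2r.
by case/orP => [/eqP u0|/eqP]; first by move: u_gt0'; rewrite u0.
Qed.

Lemma fibre_edge_spanned S f c e :
  e \subset line_fibre S f c -> #|e| = k -> e \in spanned_edges k S.
Proof.
move=> /subsetP sub card_e; rewrite inE; apply/andP; split.
  by apply/subsetP => x /sub; rewrite inE => /andP [].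
rewrite /is_edge card_e eqxx /on_common_lineb.
case: excluded_middle_informative => // [[]].
exists (fun i => INR (c i).+1), (fun i => INR (step f i)).
move=> x /sub; rewrite inE => /andP [_ /eqP bx].
exists (INR (line_pos f x)) => i.
by rewrite /coordR -(line_baseE f x i) bx -addSn -plusE -multE plus_INR mult_INR.
Qed.

Lemma sum_fibre_subsets_leq S : 0 < B -> 1 < k ->
  \sum_(f : {ffun 'I_k -> 'I_B}) \sum_(c : vert n k) 'C(#|line_fibre S f c|, k)
    <= (n %/ B).+1 * #|spanned_edges k S|.
Proof.
move=> B_gt0 k_gt1.
have cardE (T : finType) (P : {pred T}) : #|P| = \sum_(x : T) (x \in P : nat).
  by rewrite -sum1_card big_mkcond.
have binE f c : 'C(#|line_fibre S f c|, k) =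
    \sum_(e : {set vert n k}) ((e \subset line_fibre S f c) && (#|e| == k) : nat).
  by rewrite -cards_draws cardE; apply: eq_bigr => e _; rewrite inE.
under eq_bigr do under eq_bigr do rewrite binE.
under eq_bigr do rewrite exchange_big.
rewrite exchange_big cardE big_distrr; apply: leq_sum => e _.
case card_e: (#|e| == k); last first.
  by rewrite big1 // => f _; rewrite big1 // => c _; rewrite andbF.
under eq_bigr do under eq_bigr do rewrite andbT.
rewrite pair_big /= -cardE.
case: (boolP (e \in spanned_edges k S)) => [_|not_spanned].
  have e_gt1 : 1 < #|e| by rewrite (eqP card_e); lia.
  rewrite muln1; apply: leq_trans (card_fibres_containing S B_gt0 e_gt1).
  by apply: eq_leq; apply: eq_card => p; rewrite inE.
rewrite muln0 leqn0; apply/eqP/eq_card0 => p; rewrite !inE.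
by apply: contraNF not_spanned => sub; exact: fibre_edge_spanned sub (eqP card_e).
Qed.

(* There are at most L base points, so S splits into at most L fibres. *)
Lemma sum_fibre_subsets_geq S f : 0 < k -> 0 < B ->
  (#|S| - k * (k * (2 * B * n ^ k.-1))) ^ k <=
  k`! * (k * (2 * B * n ^ k.-1)) ^ k.-1 * \sum_(c : vert n k) 'C(#|line_fibre S f c|, k).
Proof.
move=> k_gt0 B_gt0; set L := k * (2 * B * n ^ k.-1).
pose bases := [set c : vert n k | [exists i, c i < 2 * B]].
have card_bases : #|bases| <= L := card_some_coord_lt n k (2 * B).
have partS : #|S| = \sum_(c in bases) #|line_fibre S f c|.
  rewrite -sum1_card (partition_big (line_base f) (mem bases)).
    by apply: eq_bigr => c _; rewrite -sum1_card; apply: eq_bigl => x; rewrite !inE.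
  by move=> x _; rewrite !inE line_base_small.
have le_sum : #|S| - k * L <= \sum_(c in bases) (#|line_fibre S f c| - k).
  have : #|S| <= k * #|bases| + \sum_(c in bases) (#|line_fibre S f c| - k).
    by rewrite partS mulnC -sum_nat_const -big_split; apply: leq_sum => c _ /=; lia.
  by rewrite leq_subLR => /leq_trans; apply; rewrite leq_add2r leq_mul2l card_bases orbT.
apply: leq_trans (leq_exp2rW k le_sum) _.
have := power_mean (mem bases) (fun c => #|line_fibre S f c| - k) k.-1.
rewrite prednK // => /leq_trans; apply.
rewrite -mulnA mulnCA leq_mul ?leq_exp2rW // big_distrr.
rewrite [X in _ <= X](bigID (mem bases)) /= (leq_trans _ (leq_addr _ _)) //.
by apply: leq_sum => c _; apply: expn_sub_leq_fact_bin.
Qed.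

End Lines.

Lemma edges_lower_bound_directions n k B (S : {set vert n k}) : 0 < B -> 1 < k ->
  B ^ k * (#|S| - k * (k * (2 * B * n ^ k.-1))) ^ k <=
  k`! * (k * (2 * B * n ^ k.-1)) ^ k.-1 * ((n %/ B).+1 * #|spanned_edges k S|).
Proof.
move=> B_gt0 k_gt1.
have -> : B ^ k = #|{ffun 'I_k -> 'I_B}| by rewrite card_ffun !card_ord.
rewrite -sum_nat_const.
apply: leq_trans (leq_mul (leqnn _) (sum_fibre_subsets_leq S B_gt0 k_gt1)).
by rewrite big_distrr; apply: leq_sum => f _; apply: sum_fibre_subsets_geq; lia.
Qed.

(* The k L points lost to short fibres are at most |S| / 2, and each edge is
   counted at most 80 k^2 times. *)
Lemma edges_lower_bound_scale n k B (S : {set vert n k}) :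
  1 < k -> 0 < B -> 40 * (k * k) * B <= n < 80 * (k * k) * B -> n ^ k <= 10 * #|S| ->
  n * #|S| ^ k <= 80 * 80 * (k * k * (k * k)) * 2 ^ k * (2 * k) ^ k.-1 * k`!
                  * n ^ (k.-1 * k.-1) * #|spanned_edges k S|.
Proof.
move=> k_gt1 B_gt0 /andP [B_le n_lt] dense.
have k_gt0 : 0 < k := ltnW k_gt1.
have lines_le : (n %/ B).+1 <= 80 * (k * k) by rewrite ltn_divLR.
have nQ : n ^ k = n * n ^ k.-1 by rewrite -expnS prednK.
have half : #|S| <= 2 * (#|S| - k * (k * (2 * B * n ^ k.-1))).
  have : 40 * (k * k) * B * n ^ k.-1 <= 10 * #|S|.
    by apply: leq_trans dense; rewrite nQ leq_mul2r B_le orbT.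
  move: (n ^ k.-1) => Q; clear; lia.
have main := edges_lower_bound_directions S B_gt0 k_gt1.
have {}main : B ^ k * #|S| ^ k <=
    2 ^ k * (k`! * (k * (2 * B * n ^ k.-1)) ^ k.-1 * (80 * (k * k) * #|spanned_edges k S|)).
  apply: leq_trans (leq_mul (leqnn _) (leq_exp2rW k half)) _.
  rewrite expnMn mulnCA leq_mul2l; apply/orP; right; apply: leq_trans main _.
  by rewrite leq_mul2l leq_mul2r lines_le !orbT.
have Bpow_gt0 : 0 < B ^ k.-1 by rewrite expn_gt0 B_gt0.
have cancel : B * #|S| ^ k <= 2 ^ k * (k`! * ((2 * k) ^ k.-1 * n ^ (k.-1 * k.-1))
                                       * (80 * (k * k) * #|spanned_edges k S|)).
  rewrite -(leq_pmul2l Bpow_gt0); move: main.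
  have eB : B ^ k = B ^ k.-1 * B by rewrite -expnSr prednK.
  have eL : (k * (2 * B * n ^ k.-1)) ^ k.-1 = (2 * k) ^ k.-1 * B ^ k.-1 * (n ^ k.-1) ^ k.-1.
    by rewrite -!expnMn; congr (_ ^ _); lia.
  rewrite eB eL expnM.
  move: (2 ^ k) (k`!) ((2 * k) ^ k.-1) (B ^ k.-1) ((n ^ k.-1) ^ k.-1) (#|S| ^ k).
  move: #|spanned_edges k S| => E P F Z Y W X; clear; lia.
apply: leq_trans (leq_mul (ltnW n_lt) (leqnn _)) _.
move: cancel; rewrite -(leq_pmul2l (_ : 0 < 80 * (k * k))) ?muln_gt0 ?k_gt0 //.
move: (2 ^ k) (k`!) ((2 * k) ^ k.-1) (n ^ (k.-1 * k.-1)) (#|S| ^ k).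
move: #|spanned_edges k S| => E P F Z W X; clear; lia.
Qed.

Lemma edges_lower_bound_dense n k (S : {set vert n k}) :
  1 < k -> 80 * (k * k) < n -> n ^ k <= 10 * #|S| ->
  n * #|S| ^ k <= 80 * 80 * (k * k * (k * k)) * 2 ^ k * (2 * k) ^ k.-1 * k`!
                  * n ^ (k.-1 * k.-1) * #|spanned_edges k S|.
Proof.
move=> k_gt1 big_n.
have d_gt0 : 0 < 40 * (k * k) by rewrite !muln_gt0 (ltnW k_gt1).
have B_gt0 : 0 < n %/ (40 * (k * k)) by rewrite divn_gt0 //; lia.
apply: (edges_lower_bound_scale (B := n %/ (40 * (k * k)))) => //.
rewrite mulnC leq_divM /=; move: B_gt0 (ltn_ceil n d_gt0).
move: (n %/ _) => B; clear; nia.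
Qed.

Lemma dense_constant_leq k : 3 <= k ->
  80 * 80 * (k * k * (k * k)) * 2 ^ k * (2 * k) ^ k.-1 <= 10 * k * 2 ^ (3 * k * k) * 2 ^ (3 * k).
Proof.
move=> k_ge3.
have k_lt : k < 2 ^ k by apply: ltn_expl.
have cube : k * k * k <= 2 ^ (3 * k).
  rewrite (mulnC 3) expnM; apply: leq_trans (leq_exp2rW 3 (ltnW k_lt)).
  by rewrite !expnS expn0 muln1 mulnA.
have twok : (2 * k) ^ k.-1 <= 2 ^ (k.+1 * k.-1).
  by rewrite expnM leq_exp2rW // expnS leq_mul2l (ltnW k_lt) orbT.
have exps : 2 ^ 10 * (2 ^ k * 2 ^ (k.+1 * k.-1)) <= 2 ^ (3 * k * k).
  by rewrite -!expnD leq_pexp2l //; nia.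
have lhs : 80 * 80 * (k * k * (k * k)) * 2 ^ k * (2 * k) ^ k.-1
          <= 10 * k * 2 ^ (3 * k) * (2 ^ 10 * (2 ^ k * 2 ^ (k.+1 * k.-1))).
  have -> : 80 * 80 * (k * k * (k * k)) * 2 ^ k * (2 * k) ^ k.-1
            = 80 * 80 * k * (k * k * k) * (2 ^ k * (2 * k) ^ k.-1).
    by move: (2 ^ k) ((2 * k) ^ k.-1) => P Z; clear; lia.
  have -> : 10 * k * 2 ^ (3 * k) * (2 ^ 10 * (2 ^ k * 2 ^ (k.+1 * k.-1)))
            = 10 * 2 ^ 10 * k * 2 ^ (3 * k) * (2 ^ k * 2 ^ (k.+1 * k.-1)).
    by move: (2 ^ (3 * k)) (2 ^ k * 2 ^ (k.+1 * k.-1)) => R P; clear; lia.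
  have coeff : 80 * 80 * k <= 10 * 2 ^ 10 * k by rewrite leq_mul2r orbC.
  exact: leq_mul (leq_mul coeff cube) (leq_mul (leqnn _) twok).
by apply: leq_trans lhs _; rewrite [X in _ <= X]mulnAC leq_mul2l exps orbT.
Qed.

Lemma edges_lower_bound_nat n k (S : {set vert n k}) :
  3 <= k -> 80 * (k * k) < n -> n ^ k <= 10 * #|S| ->
  n * #|S| ^ k <= k`! * 2 ^ (3 * k * k) * 10 * 2 ^ (3 * k) * k
                  * n ^ (k.-1 * k.-1) * #|spanned_edges k S|.
Proof.
move=> k_ge3 big_n dense.
apply: leq_trans (edges_lower_bound_dense (ltnW k_ge3) big_n dense) _.
move: (leq_mul (dense_constant_leq k_ge3) (leqnn (k`! * n ^ (k.-1 * k.-1) * #|spanned_edges k S|))).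
move: (2 ^ k) ((2 * k) ^ k.-1) (2 ^ (3 * k * k)) (2 ^ (3 * k)) (k`!) (n ^ (k.-1 * k.-1)).
move: #|spanned_edges k S| => E P Z T R F N; clear; lia.
Qed.

Lemma INR_muln (a b : nat) : INR (a * b) = (INR a * INR b)%R.
Proof. by rewrite -multE mult_INR. Qed.

Lemma INR_expn (a b : nat) : INR (a ^ b) = (INR a ^ b)%R.
Proof. by elim: b => [|b IH]; rewrite ?expn0 // expnS INR_muln IH. Qed.

Lemma log2_INR_le (n : nat) : (log2 (INR n) <= INR n)%R.
Proof.
have ln2_gt0 : (0 < ln 2)%R by rewrite -ln_1; apply: ln_increasing; lra.
rewrite /log2; apply: (Rmult_le_reg_r (ln 2)) => //.
rewrite /Rdiv Rmult_assoc Rinv_l; last lra.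
case: n => [|n].
  by rewrite /= Rmult_0_l /ln; case: Rlt_dec => [/Rlt_irrefl []|_]; lra.
have pow_gt : (INR n.+1 < 2 ^ n.+1)%R.
  by rewrite -(INR_IZR_INZ 2) -INR_expn; apply: lt_INR; apply/ltP; exact: ltn_expl.
rewrite Rmult_1_r -ln_pow; last lra.
by apply: Rlt_le; apply: ln_increasing => //; apply: lt_0_INR; apply/ltP.
Qed.

Lemma small_dimension_bounds (n k : nat) :
  (3 <= k)%N -> (INR k < 0.01 * sqrt (log2 (INR n)))%R ->
  (1 <= log2 (INR n))%R /\ (80 * (k * k) < n)%N.
Proof.
move=> k_ge3 k_lt.
have k3 : (3 <= INR k)%R by have := le_INR 3 k (elimT leP k_ge3); rewrite /=; lra.
set L := log2 (INR n) in k_lt *.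
have L_gt0 : (0 < L)%R.
  by apply: Rnot_le_lt => L_le0; move: k_lt; rewrite sqrt_neg_0 //; lra.
have kk_lt : (INR k * INR k < 0.0001 * L)%R.
  by have := sqrt_sqrt L (Rlt_le _ _ L_gt0); have := sqrt_pos L; nra.
split; first by nra.
apply/ltP; apply: INR_lt; rewrite !INR_muln (INR_IZR_INZ 80).
by have := log2_INR_le n; rewrite -/L /=; lra.
Qed.

Lemma pow_density_split (g x : R) (k : nat) : (0 < k)%N ->
  (x * (g * x ^ k) ^ k = g ^ k * x ^ (2 * k) * x ^ (k.-1 * k.-1))%R.
Proof.
move=> k_gt0; have e : ((k * k).+1 = 2 * k + k.-1 * k.-1)%N by rewrite -{1 2}(prednK k_gt0); lia.
rewrite Rpow_mult_distr -pow_mult -Rmult_assoc (Rmult_comm x) Rmult_assoc tech_pow_Rmult.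
by rewrite multE e pow_add Rmult_assoc.
Qed.

Lemma Rdiv_le_of_scaled (k : nat) (g m D L E : R) :
  (0 < g <= 1 -> 0 <= m -> 0 < D -> 1 <= L -> g ^ k * m <= D * E ->
   g ^ (k + 1) * m / (D * L) <= E)%R.
Proof.
move=> [g_gt0 g_le1] m_ge0 D_gt0 L_ge1 le_DE.
have gkm_ge0 : (0 <= g ^ k * m)%R by apply: Rmult_le_pos => //; apply: pow_le; lra.
have DL_gt0 : (0 < D * L)%R by nra.
apply: (Rmult_le_reg_r (D * L)) => //.
rewrite /Rdiv Rmult_assoc Rinv_l ?Rmult_1_r; last lra.
rewrite pow_add /=; nra.
Qed.

Theorem lemma4p4 :
  exists N : nat, forall n : nat, (N <= n)%N ->
  forall (k : nat) (gamma : R),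
    (3 <= k)%N ->
    (INR k < 0.01 * sqrt (log2 (INR n)))%R ->
    (0.1 < gamma)%R -> (gamma <= 1)%R ->
  forall S : {set vert n k},
    INR #|S| = (gamma * INR n ^ k)%R ->
    (gamma ^ (k + 1) * INR n ^ (2 * k)
       / (INR (factorial k) * 2 ^ (3 * k * k) * 10 * 2 ^ (3 * k) * INR k
          * log2 (INR n))
     <= INR #|spanned_edges k S|)%R.
Proof.
exists 0%N => n _ k gamma k_ge3 k_lt gamma_gt gamma_le1 S card_S.
have [log_ge1 big_n] := small_dimension_bounds k_ge3 k_lt.
have n_gt0 : (0 < INR n)%R by apply: lt_0_INR; apply/ltP; lia.
have nk_gt0 : (0 < INR n ^ k)%R by apply: pow_lt.
have two : INR 2 = 2%R by rewrite INR_IZR_INZ.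
have ten : INR 10 = 10%R by rewrite INR_IZR_INZ.
have dense : (n ^ k <= 10 * #|S|)%N.
  by apply/leP; apply: INR_le; rewrite INR_muln INR_expn card_S ten; nra.
have := le_INR _ _ (elimT leP (edges_lower_bound_nat k_ge3 big_n dense)).
rewrite !INR_muln !INR_expn card_S pow_density_split ?(ltnW (ltnW k_ge3)) // two ten => bound.
apply: Rdiv_le_of_scaled; [lra | apply: pow_le; lra | | exact: log_ge1 |].
  apply: Rmult_lt_0_compat; last by apply: lt_0_INR; apply/ltP; lia.
  repeat apply: Rmult_lt_0_compat; try apply: pow_lt; try lra.
  exact: lt_0_INR (elimT ltP (fact_gt0 k)).
apply: (Rmult_le_reg_r (INR n ^ (k.-1 * k.-1))); first exact: pow_lt.
lra.
Qed.
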